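(* Let $(X,\Sigma)$ be a measurable space, $p$ a transition function on it with associated operator $A$ on $ba(X,\Sigma)$, and let $K=\{\mu_1,\dots,\mu_m\}$ be a finitely additive cycle of measures of $A$ of period $m$ whose cyclic measures are pairwise disjoint. For each $i$ let $\mu_i=\mu_i^{ca}+\mu_i^{pfa}$ be the decomposition of $\mu_i$ into a countably additive component $\mu_i^{ca}$ and a purely finitely additive component $\mu_i^{pfa}$. Then these components are also cyclic: $K^{ca}=\{\mu_1^{ca},\dots,\mu_m^{ca}\}$ and $K^{pfa}=\{\mu_1^{pfa},\dots,\mu_m^{pfa}\}$ form cycles (i.e. $A\mu_i^{ca}=\mu_{i+1}^{ca}$, $A\mu_i^{pfa}=\mu_{i+1}^{pfa}$ for $1\le i\le m-1$, $A\mu_m^{ca}=\mu_1^{ca}$, $A\mu_m^{pfa}=\mu_1^{pfa}$); $K$ is the coordinatewise sum $K=K^{ca}+K^{pfa}$; the mean measure of $K$ is uniquely representable as the sum of its countably additive and purely finitely additive components, and these coincide with the mean measures of $K^{ca}$ and $K^{pfa}$ respectively. Moreover the measures of $K^{ca}$ are pairwise disjoint, the measures of $K^{pfa}$ are pairwise disjoint, and every measure from $K^{ca}$ is disjoint with every measure from $K^{pfa}$.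
   Context: $X$ is an arbitrary infinite set and $\Sigma$ a $\sigma$-algebra of subsets of $X$ containing all one-point sets. $ba(X,\Sigma)$ denotes the space of bounded finitely additive real-valued measures on $\Sigma$, ordered setwise. A nonnegative finitely additive measure is purely finitely additive if every countably additive measure $\lambda$ with $0\le\lambda\le\mu$ is zero; every finitely additive measure decomposes uniquely as a sum of a countably additive and a purely finitely additive measure. For positive $\mu,\nu\in ba(X,\Sigma)$, $(\mu\wedge\nu)(E)=\inf\{\mu(C)+\nu(E\setminus C): C\subset E, C\in\Sigma\}$, and $\mu,\nu$ are called disjoint if $\mu\wedge\nu=0$. A transition function is a map $p(x,E)$ with $0\le p(x,E)\le1$, $p(x,X)=1$, $p(\cdot,E)$ bounded $\Sigma$-measurable for every $E$, and $p(x,\cdot)$ countably additive for every $x$. The Markov operator is $A\mu(E)=\int_X p(x,E)\,\mu(dx)$. A cycle of measures of $A$ is a finite numbered set $\{\mu_1,\dots,\mu_m\}$ of pairwise different positive finitely additive measures with $A\mu_i=\mu_{i+1}$ ($1\le i\le m-1$), $A\mu_m=\mu_1$; its mean measure is $\frac1m\sum_k\mu_k$. The sum of two cycles of the same period is obtained by coordinatewise addition. *)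

(* Measurable space (X, Sigma) given as a raw
   family of sets Sigma : set (set X); measures are functions set X -> R
   and are only ever compared on Sigma. *)
From mathcomp Require Import all_boot all_order all_algebra.
From mathcomp Require Import all_classical all_reals all_analysis.
Set Implicit Arguments. Unset Strict Implicit. Unset Printing Implicit Defensive.
Import Order.TTheory GRing.Theory Num.Theory.
Import numFieldNormedType.Exports.
Local Open Scope classical_set_scope.
Local Open Scope ring_scope.

Section Defs.
Variables (R : realType) (X : Type) (Sigma : set (set X)).

Definition is_sigma_algebra : Prop :=
  [/\ Sigma setT,
      (forall E, Sigma E -> Sigma (~` E)) &
      (forall F : nat -> set X, (forall n, Sigma (F n)) ->
          Sigma (\bigcup_n F n))].

Definition meq (mu nu : set X -> R) : Prop := forall E, Sigma E -> mu E = nu E.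

Definition ba_measure (mu : set X -> R) : Prop :=
  [/\ mu set0 = 0,
      (forall E F, Sigma E -> Sigma F -> E `&` F = set0 ->
          mu (E `|` F) = mu E + mu F) &
      (exists M : R, forall E, Sigma E -> `|mu E| <= M)].

Definition nonneg_measure (mu : set X -> R) : Prop :=
  forall E, Sigma E -> 0 <= mu E.

Definition countably_additive (mu : set X -> R) : Prop :=
  forall F : nat -> set X, (forall n, Sigma (F n)) -> trivIset setT F ->
    ((fun n : nat => \sum_(0 <= i < n) mu (F i)) : nat -> R) @ \oo --> (mu (\bigcup_n F n) : R).

Definition purely_fa (mu : set X -> R) : Prop :=
  [/\ ba_measure mu, nonneg_measure mu &
      forall lam, ba_measure lam -> countably_additive lam ->
        (forall E, Sigma E -> 0 <= lam E <= mu E) -> meq lam (fun _ => 0)].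

Definition meas_meet (mu nu : set X -> R) (E : set X) : R :=
  inf [set mu C + nu (E `\` C) | C in [set C | Sigma C /\ C `<=` E]].

Definition meas_disjoint (mu nu : set X -> R) : Prop :=
  meq (meas_meet mu nu) (fun _ => 0).

Definition finite_partition (n : nat) (F : nat -> set X) : Prop :=
  [/\ forall i, (i < n)%N -> Sigma (F i),
      trivIset `I_n F &
      \bigcup_(i in `I_n) F i = setT].

(* integral of a bounded Sigma-measurable function f w.r.t. a nonnegative
   finitely additive measure mu: supremum of the lower (Darboux) sums over
   finite measurable partitions *)
Definition fa_integral (mu : set X -> R) (f : X -> R) : R :=
  sup [set s | exists n F, finite_partition n F /\
         s = \sum_(i < n) inf (f @` F i) * mu (F i)].

Definition Sigma_measurable_fun (f : X -> R) : Prop :=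
  forall a : R, Sigma [set x | f x <= a].

Definition transition_function (p : X -> set X -> R) : Prop :=
  [/\ (forall x E, Sigma E -> 0 <= p x E <= 1),
      (forall x, p x setT = 1),
      (forall E, Sigma E -> Sigma_measurable_fun (fun x => p x E)) &
      (forall x, ba_measure (p x) /\ countably_additive (p x))].

Definition markov_op (p : X -> set X -> R) (mu : set X -> R) : set X -> R :=
  fun E => fa_integral mu (fun x => p x E).

(* cycle of measures of A of period m (indices 0..m-1) *)
Definition is_cycle (p : X -> set X -> R) (m : nat) (mu : nat -> set X -> R) : Prop :=
  [/\ (0 < m)%N,
      (forall i, (i < m)%N -> ba_measure (mu i) /\ nonneg_measure (mu i)),
      (forall i j, (i < m)%N -> (j < m)%N -> i <> j -> ~ meq (mu i) (mu j)) &
      (forall i, (i < m)%N -> meq (markov_op p (mu i)) (mu (i.+1 %% m)%N))].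

Definition mean_measure (m : nat) (mu : nat -> set X -> R) : set X -> R :=
  fun E => m%:R^-1 * \sum_(k < m) mu k E.

End Defs.

From mathcomp Require Import all_boot all_order all_algebra.
From mathcomp Require Import all_classical all_reals all_analysis.
From mathcomp Require Import zify ring lra.
Import Order.TTheory GRing.Theory Num.Theory.
Import numFieldNormedType.Exports.
Local Open Scope classical_set_scope.
Local Open Scope ring_scope.
Set Implicit Arguments. Unset Strict Implicit. Unset Printing Implicit Defensive.

(* A is linear in the measure, preserves total mass, and maps countably additive
   measures to countably additive ones (the superlevel sets of x |-> p(x, tail)
   decrease to the empty set).  Since A mu_i = mu_(i+1), the countably additive
   signed measure A mu_i^ca - mu_(i+1)^ca is bounded above by the purely finitely
   additive mu_(i+1)^pfa; its positive variation is then a countably additive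
   measure below mu_(i+1)^pfa, hence zero, so A mu_i^ca <= mu_(i+1)^ca.  Summing
   total masses around the cycle turns these inequalities into equalities.  The
   statements about mean measures and disjointness follow from the closure of the
   two classes under sums and positive multiples, from the uniqueness of the
   decomposition (same positive-variation argument), from monotonicity of the
   meet, and from the fact that a countably additive and a purely finitely
   additive measure are always disjoint. *)

Lemma in_bigsetU_nat (X : Type) (E : nat -> set X) n x :
  (\big[setU/set0]_(0 <= i < n) E i) x <-> exists2 i, (i < n)%N & E i x.
Proof.
rewrite big_mkord -bigcup_mkord; split; first by case=> i /= ? ?; exists i.
by case=> i ? ?; exists i.
Qed.

Lemma trivIset_setI0 (I X : Type) (D : set I) (F : I -> set X) i j :
  trivIset D F -> D i -> D j -> i <> j -> F i `&` F j = set0.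
Proof.
move=> tF Di Dj ij; apply/seteqP; split => // x [Fix Fjx].
by apply: ij; apply: tF => //; exists x.
Qed.

Section SigmaAlgebra.
Variables (X : Type) (Sigma : set (set X)).
Hypothesis sigmaS : is_sigma_algebra Sigma.

Lemma sigmaT : Sigma setT. Proof. by case: sigmaS. Qed.

Lemma sigmaC E : Sigma E -> Sigma (~` E). Proof. by case: sigmaS => _ + _; apply. Qed.

Lemma sigma0 : Sigma set0. Proof. by rewrite -setCT; exact: sigmaC sigmaT. Qed.

Lemma sigma_bigcup (F : nat -> set X) : (forall n, Sigma (F n)) -> Sigma (\bigcup_n F n).
Proof. by case: sigmaS => _ _; apply. Qed.

Lemma sigmaU A B : Sigma A -> Sigma B -> Sigma (A `|` B).
Proof.
by move=> SA SB; rewrite -bigcup2E; apply: sigma_bigcup => -[|[|n]] //=; exact: sigma0.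
Qed.

Lemma sigmaI A B : Sigma A -> Sigma B -> Sigma (A `&` B).
Proof.
by move=> SA SB; rewrite -[A]setCK -[B]setCK -setCU; apply/sigmaC/sigmaU; exact: sigmaC.
Qed.

Lemma sigmaD A B : Sigma A -> Sigma B -> Sigma (A `\` B).
Proof. by move=> SA SB; rewrite setDE; apply: sigmaI => //; exact: sigmaC. Qed.

Lemma sigma_bigsetU (E : nat -> set X) n :
  (forall i, (i < n)%N -> Sigma (E i)) -> Sigma (\big[setU/set0]_(0 <= i < n) E i).
Proof.
elim: n => [|n IH] SE; first by rewrite big_geq //; exact: sigma0.
rewrite big_nat_recr //=; apply: sigmaU; last exact: SE.
by apply: IH => i /ltnW; exact: SE.
Qed.

End SigmaAlgebra.

Section FinitelyAdditive.
Variables (R : realType) (X : Type) (Sigma : set (set X)).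
Hypothesis sigmaS : is_sigma_algebra Sigma.
Variable mu : set X -> R.
Hypothesis muB : ba_measure Sigma mu.

Lemma measure0 : mu set0 = 0. Proof. by case: muB. Qed.

Lemma measureU A B : Sigma A -> Sigma B -> A `&` B = set0 -> mu (A `|` B) = mu A + mu B.
Proof. by case: muB => _ + _; apply. Qed.

Lemma measure_bounded : exists M, forall E, Sigma E -> `|mu E| <= M.
Proof. by case: muB. Qed.

Lemma measureID A B : Sigma A -> Sigma B -> mu A = mu (A `&` B) + mu (A `\` B).
Proof.
move=> SA SB; rewrite -measureU ?setUIDK //; [exact: (sigmaI sigmaS)|exact: (sigmaD sigmaS)|].
by rewrite setDE setIACA setICr setI0.
Qed.

Lemma measureD A B : Sigma A -> Sigma B -> B `<=` A -> mu (A `\` B) = mu A - mu B.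
Proof. by move=> SA SB BA; rewrite (measureID SA SB) (setIidr BA) addrC addKr. Qed.

Lemma measure_bigsetU (E : nat -> set X) n :
  (forall i, (i < n)%N -> Sigma (E i)) ->
  (forall i j, (i < n)%N -> (j < n)%N -> i <> j -> E i `&` E j = set0) ->
  mu (\big[setU/set0]_(0 <= i < n) E i) = \sum_(0 <= i < n) mu (E i).
Proof.
elim: n => [|n IH] SE dE; first by rewrite !big_geq // measure0.
have SE' i : (i < n)%N -> Sigma (E i) by move/ltnW; exact: SE.
rewrite !big_nat_recr //= measureU.
- by rewrite IH // => i j /ltnW ? /ltnW ?; exact: dE.
- exact: sigma_bigsetU sigmaS _ _ SE'.
- exact: SE.
apply/seteqP; split => // x [/in_bigsetU_nat[i ilt Eix] Enx].
suff : E i `&` E n = set0 by move/seteqP => [/(_ x (conj Eix Enx))].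
by apply: dE => //; [exact: ltnW|move=> eqin; rewrite eqin ltnn in ilt].
Qed.

Hypothesis mu_ge0 : nonneg_measure Sigma mu.

Lemma le_measure A B : Sigma A -> Sigma B -> B `<=` A -> mu B <= mu A.
Proof. by move=> SA SB BA; rewrite -subr_ge0 -measureD //; exact/mu_ge0/(sigmaD sigmaS). Qed.

End FinitelyAdditive.

Section Partition.
Variables (X : Type) (Sigma : set (set X)).
Hypothesis sigmaS : is_sigma_algebra Sigma.

Lemma partition_sigma n F i : finite_partition Sigma n F -> (i < n)%N -> Sigma (F i).
Proof. by case=> + _ _; apply. Qed.

Lemma partition_cover n F x : finite_partition Sigma n F -> exists2 i, (i < n)%N & F i x.
Proof. by case=> _ _ /seteqP[_ /(_ x I)[i]]; exists i. Qed.

Lemma partition_disj n F i j : finite_partition Sigma n F ->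
  (i < n)%N -> (j < n)%N -> i <> j -> F i `&` F j = set0.
Proof. by case=> _ tF _ ilt jlt; exact: trivIset_setI0 tF ilt jlt. Qed.

Lemma partition_setT : finite_partition Sigma 1 (fun _ => setT).
Proof.
split; first by move=> *; exact: sigmaT.
  by move=> i j; rewrite /= !ltnS !leqn0 => /eqP -> /eqP ->.
by apply/seteqP; split => // x _; exists 0%N.
Qed.

Section Measure.
Variables (R : realType) (mu : set X -> R).
Hypothesis muB : ba_measure Sigma mu.

Lemma measure_partition_setI n F S : finite_partition Sigma n F -> Sigma S ->
  \sum_(i < n) mu (S `&` F i) = mu S.
Proof.
move=> PF SS; rewrite -(big_mkord xpredT (fun i => mu (S `&` F i))).
rewrite -(measure_bigsetU sigmaS muB).
- congr mu; apply/seteqP; split => x; first by move/in_bigsetU_nat => [i _ []].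
  by move=> Sx; apply/in_bigsetU_nat; have [i ? ?] := partition_cover x PF; exists i.
- by move=> i ilt; apply: (sigmaI sigmaS) => //; exact: partition_sigma PF ilt.
move=> i j ilt jlt ij; rewrite setIACA setIid (partition_disj PF ilt jlt ij).
exact: setI0.
Qed.

Lemma measure_partition n F : finite_partition Sigma n F -> \sum_(i < n) mu (F i) = mu setT.
Proof.
move=> PF; rewrite -(measure_partition_setI PF (sigmaT sigmaS)).
by apply: eq_bigr => i _; rewrite setTI.
Qed.

End Measure.
End Partition.

Definition lower_sum (R : realType) (X : Type) (mu : set X -> R) (f : X -> R) n
    (F : nat -> set X) :=
  \sum_(i < n) inf (f @` F i) * mu (F i).

Definition osc_le (R : realType) (X : Type) (f : X -> R) (d : R) n (F : nat -> set X) :=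
  forall i, (i < n)%N -> forall x y, F i x -> F i y -> f x <= f y + d.

Lemma inf_image_le (R : realType) (X : Type) (f : X -> R) (A : set X) x :
  (forall x, 0 <= f x) -> A x -> inf (f @` A) <= f x.
Proof. by move=> f_ge0 Ax; apply: ge_inf; [exists 0 => _ [y _ <-]|exists x]. Qed.

Lemma le_inf_image (R : realType) (X : Type) (f : X -> R) (A : set X) x c :
  A x -> (forall y, A y -> c <= f y) -> c <= inf (f @` A).
Proof. by move=> Ax cf; apply: lb_le_inf; [exists (f x), x|move=> _ [y Ay <-]; exact: cf]. Qed.

Lemma osc_le_inf (R : realType) (X : Type) (f : X -> R) d n F i x :
  osc_le f d n F -> (i < n)%N -> F i x -> f x <= inf (f @` F i) + d.
Proof.
move=> oscf ilt Fx; rewrite -lerBlDr; apply: (le_inf_image Fx) => y Fy.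
by rewrite lerBlDr; exact: oscf i ilt x y Fx Fy.
Qed.

Lemma osc_le_add (R : realType) (X : Type) (f g : X -> R) d e n F :
  osc_le f d n F -> osc_le g e n F -> osc_le (fun x => f x + g x) (d + e) n F.
Proof.
move=> oscf oscg i ilt x y Fx Fy; rewrite addrACA.
by apply: lerD; [exact: oscf i ilt x y Fx Fy|exact: oscg i ilt x y Fx Fy].
Qed.

Section Integral.
Variables (R : realType) (X : Type) (Sigma : set (set X)).
Hypothesis sigmaS : is_sigma_algebra Sigma.
Variable mu : set X -> R.
Hypotheses (muB : ba_measure Sigma mu) (mu_ge0 : nonneg_measure Sigma mu).

Lemma lower_sum_le_osc (f : X -> R) d n F k G : (forall x, 0 <= f x) ->
  finite_partition Sigma n F -> osc_le f d n F -> finite_partition Sigma k G ->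
  lower_sum mu f k G <= lower_sum mu f n F + d * mu setT.
Proof.
move=> f_ge0 PF oscf PG; rewrite /lower_sum.
have -> : \sum_(j < k) inf (f @` G j) * mu (G j) =
    \sum_(j < k) \sum_(i < n) inf (f @` G j) * mu (G j `&` F i).
  apply: eq_bigr => j _; rewrite -mulr_sumr (measure_partition_setI sigmaS muB PF) //.
  exact: partition_sigma PG _.
have -> : \sum_(i < n) inf (f @` F i) * mu (F i) + d * mu setT =
    \sum_(i < n) \sum_(j < k) (inf (f @` F i) + d) * mu (G j `&` F i).
  rewrite -(measure_partition sigmaS muB PF) mulr_sumr -big_split /=.
  apply: eq_bigr => i _; rewrite -mulrDl -mulr_sumr; congr (_ * _).
  rewrite -(measure_partition_setI sigmaS muB PG (partition_sigma PF (ltn_ord i))).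
  by apply: eq_bigr => j _; rewrite setIC.
rewrite exchange_big /=; apply: ler_sum => i _; apply: ler_sum => j _.
have [->|/set0P[x [Gx Fx]]] := eqVneq (G j `&` F i) set0.
  by rewrite (measure0 muB) !mulr0.
apply: ler_wpM2r.
  by apply/mu_ge0/(sigmaI sigmaS); [exact: partition_sigma PG (ltn_ord j)|
                                     exact: partition_sigma PF (ltn_ord i)].
exact: le_trans (inf_image_le f_ge0 Gx) (osc_le_inf oscf (ltn_ord i) Fx).
Qed.

Lemma osc_le_setT (f : X -> R) B : (forall x, 0 <= f x <= B) -> osc_le f B 1 (fun _ => setT).
Proof.
move=> fB i _ x y _ _; have /andP[_ fxB] := fB x; have /andP[fy0 _] := fB y.
by apply: le_trans fxB _; rewrite lerDr.
Qed.

Lemma lower_sum_le_integral (f : X -> R) B n F : (forall x, 0 <= f x <= B) ->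
  finite_partition Sigma n F -> lower_sum mu f n F <= fa_integral Sigma mu f.
Proof.
move=> fB PF; apply: ub_le_sup; last by exists n, F.
exists (lower_sum mu f 1 (fun _ => setT) + B * mu setT) => _ [k [G [PG ->]]].
apply: lower_sum_le_osc PG => //; last exact: osc_le_setT.
- by move=> x; case/andP: (fB x).
- exact: partition_setT.
Qed.

Lemma integral_le_lower_sum (f : X -> R) d n F : (forall x, 0 <= f x) ->
  finite_partition Sigma n F -> osc_le f d n F ->
  fa_integral Sigma mu f <= lower_sum mu f n F + d * mu setT.
Proof.
move=> f_ge0 PF oscf; apply: ge_sup; first by exists (lower_sum mu f n F), n, F.
by move=> _ [k [G [PG ->]]]; exact: lower_sum_le_osc.
Qed.

End Integral.

Lemma le_of_le_add_invS (R : realType) (a b c : R) : 0 <= c ->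
  (forall N : nat, a <= b + N.+1%:R^-1 * c) -> a <= b.
Proof.
move=> c0 abc; rewrite leNgt; apply/negP => ba.
have e0 : 0 < (a - b) / (c + 1) by apply: divr_gt0; lra.
have [N] := ltr_add_invr e0; rewrite add0r ltr_pdivlMr; last by lra.
have := abc N; have : 0 <= N.+1%:R^-1 :> R by rewrite invr_ge0.
set t := N.+1%:R^-1 => t0 abN; rewrite mulrDr mulr1; nra.
Qed.

Definition level_set (R : realType) (X : Type) (f : X -> R) (K : nat) : nat -> set X :=
  fun j => [set x | (j%:R - 1) / K%:R < f x <= j%:R / K%:R].

Definition refine_partition (X : Type) (F G : nat -> set X) (k : nat) : nat -> set X :=
  fun j => F (j %/ k)%N `&` G (j %% k)%N.

Lemma ltn_mul_gt0r i n k : (i < n * k)%N -> (0 < k)%N.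
Proof. by case: k => //; rewrite muln0. Qed.

Section FinePartition.
Variables (R : realType) (X : Type) (Sigma : set (set X)).
Hypothesis sigmaS : is_sigma_algebra Sigma.

Lemma sigma_gt (h : X -> R) e : Sigma_measurable_fun Sigma h -> Sigma [set x | e < h x].
Proof.
move=> hS; have -> : [set x | e < h x] = ~` [set x | h x <= e].
  by apply/seteqP; split => x /=; rewrite ltNge => /negP.
by apply: (sigmaC sigmaS); apply: hS.
Qed.

Lemma level_set_osc (f : X -> R) N : osc_le f N.+1%:R^-1 N.+2 (level_set f N.+1).
Proof.
move=> j _ x y /= /andP[_ fx] /andP[fy _]; apply: (le_trans fx).
have -> : j%:R / N.+1%:R = (j%:R - 1) / N.+1%:R + N.+1%:R^-1 :> R.
  by rewrite mulrBl mul1r subrK.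
by rewrite lerD2r ltW.
Qed.

Lemma level_set_partition (f : X -> R) N : Sigma_measurable_fun Sigma f ->
  (forall x, 0 <= f x <= 1) -> finite_partition Sigma N.+2 (level_set f N.+1).
Proof.
move=> fS f01; split.
- move=> j _; have -> : level_set f N.+1 j =
      [set x | f x <= j%:R / N.+1%:R] `\` [set x | f x <= (j%:R - 1) / N.+1%:R].
    apply/seteqP; split => x /=; first by case/andP => ? ?; split => //; apply/negP; rewrite -ltNge.
    by case=> ? /negP; rewrite -ltNge => ?; apply/andP.
  by apply: (sigmaD sigmaS); apply: fS.
- move=> i j _ _ [x [/= /andP[ix xi] /andP[jx xj]]].
  have := lt_le_trans ix xj; have := lt_le_trans jx xi.
  by rewrite !ltr_pM2r ?invr_gt0 // !ltrBlDr !natr1 !ltr_nat; lia.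
apply/seteqP; split => // x _.
have fxN : f x <= N.+1%:R / N.+1%:R by rewrite divff ?gt_eqF //; case/andP: (f01 x).
have [j fxj jmin] := ex_minnP (ex_intro (fun j => f x <= j%:R / N.+1%:R) _ fxN).
exists j; first by have := jmin _ fxN; rewrite /=; lia.
rewrite /level_set /= fxj andbT; case: j fxj jmin => [|j] _ jmin.
  by rewrite sub0r mulNr mul1r; apply: lt_le_trans (_ : - _ < 0) _; case/andP: (f01 x).
by rewrite -natr1 addrK ltNge; apply/negP => /jmin; rewrite ltnn.
Qed.

Lemma refine_partition_partition n F k G : finite_partition Sigma n F ->
  finite_partition Sigma k G -> finite_partition Sigma (n * k) (refine_partition F G k).
Proof.
move=> PF PG; split.
- move=> j jlt; have k0 := ltn_mul_gt0r jlt; apply: (sigmaI sigmaS).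
    by apply: partition_sigma PF _; rewrite ltn_divLR.
  by apply: partition_sigma PG _; rewrite ltn_pmod.
- move=> i j /= ilt jlt [x [[Fix Gix] [Fjx Gjx]]]; have k0 := ltn_mul_gt0r jlt.
  case: PF PG => _ tF _ [_ tG _].
  have eqdiv : (i %/ k = j %/ k)%N by apply: tF; rewrite /= ?ltn_divLR //; exists x.
  have eqmod : (i %% k = j %% k)%N by apply: tG; rewrite /= ?ltn_pmod //; exists x.
  by rewrite (divn_eq i k) (divn_eq j k) eqdiv eqmod.
apply/seteqP; split => // x _.
have [a alt Fa] := partition_cover x PF; have [b blt Gb] := partition_cover x PG.
have k0 : (0 < k)%N by apply: leq_ltn_trans blt.
exists (a * k + b)%N; first by rewrite /=; nia.
by rewrite /refine_partition divnMDl // divn_small // addn0 modnMDl modn_small.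
Qed.

Lemma osc_le_refinel (f : X -> R) d n F k G :
  osc_le f d n F -> osc_le f d (n * k) (refine_partition F G k).
Proof.
move=> oscf j jlt x y [Fx _] [Fy _]; have k0 := ltn_mul_gt0r jlt.
by apply: (oscf (j %/ k)%N) => //; rewrite ltn_divLR.
Qed.

Lemma osc_le_refiner (f : X -> R) d n F k G :
  osc_le f d k G -> osc_le f d (n * k) (refine_partition F G k).
Proof.
move=> oscf j jlt x y [_ Gx] [_ Gy]; have k0 := ltn_mul_gt0r jlt.
by apply: (oscf (j %% k)%N) => //; rewrite ltn_pmod.
Qed.

Lemma common_osc_partition (f g : X -> R) N :
  Sigma_measurable_fun Sigma f -> (forall x, 0 <= f x <= 1) ->
  Sigma_measurable_fun Sigma g -> (forall x, 0 <= g x <= 1) ->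
  exists n F, [/\ finite_partition Sigma n F,
    osc_le f N.+1%:R^-1 n F & osc_le g N.+1%:R^-1 n F].
Proof.
move=> fS f01 gS g01; exists (N.+2 * N.+2)%N.
exists (refine_partition (level_set f N.+1) (level_set g N.+1) N.+2).
split; first by apply: refine_partition_partition; exact: level_set_partition.
  exact/osc_le_refinel/level_set_osc.
exact/osc_le_refiner/level_set_osc.
Qed.

End FinePartition.

Section MeasureAlgebra.
Variables (R : realType) (X : Type) (Sigma : set (set X)).

Lemma ba_measure0 : ba_measure Sigma (fun _ : set X => (0 : R)).
Proof. by split => // [E F _ _ _|]; [rewrite addr0|exists 0 => E _; rewrite normr0]. Qed.

Lemma ba_measureD (mu nu : set X -> R) : ba_measure Sigma mu -> ba_measure Sigma nu ->
  ba_measure Sigma (fun E => mu E + nu E).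
Proof.
move=> muB nuB; split; first by rewrite (measure0 muB) (measure0 nuB) addr0.
  by move=> E F SE SF EF0; rewrite (measureU muB) // (measureU nuB) // addrACA.
have [M1 muM1] := measure_bounded muB; have [M2 nuM2] := measure_bounded nuB.
exists (M1 + M2) => E SE; apply: le_trans (ler_normD _ _) _.
by apply: lerD; [exact: muM1|exact: nuM2].
Qed.

Lemma ba_measureZ (a : R) (mu : set X -> R) : ba_measure Sigma mu ->
  ba_measure Sigma (fun E => a * mu E).
Proof.
move=> muB; split; first by rewrite (measure0 muB) mulr0.
  by move=> E F SE SF EF0; rewrite (measureU muB) // mulrDr.
have [M muM] := measure_bounded muB; exists (`|a| * M) => E SE; rewrite normrM.
by apply: ler_wpM2l => //; exact: muM.
Qed.

Lemma nonneg_measureD (mu nu : set X -> R) : nonneg_measure Sigma mu ->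
  nonneg_measure Sigma nu -> nonneg_measure Sigma (fun E => mu E + nu E).
Proof. by move=> mu0 nu0 E SE; apply: addr_ge0; [exact: mu0|exact: nu0]. Qed.

Lemma nonneg_measureZ (a : R) (mu : set X -> R) : 0 <= a -> nonneg_measure Sigma mu ->
  nonneg_measure Sigma (fun E => a * mu E).
Proof. by move=> a0 mu0 E SE; apply: mulr_ge0 => //; exact: mu0. Qed.

Lemma countably_additive0 : countably_additive Sigma (fun _ : set X => (0 : R)).
Proof.
move=> F _ _; have -> : (fun n : nat => \sum_(0 <= i < n) (0 : R)) = (fun _ => 0).
  by apply: funext => n; rewrite big1.
exact: cvg_cst.
Qed.

Lemma countably_additiveD (mu nu : set X -> R) : countably_additive Sigma mu ->
  countably_additive Sigma nu -> countably_additive Sigma (fun E => mu E + nu E).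
Proof.
move=> muC nuC F SF tF.
have -> : (fun n : nat => \sum_(0 <= i < n) (mu (F i) + nu (F i))) =
    (fun n => \sum_(0 <= i < n) mu (F i)) + (fun n => \sum_(0 <= i < n) nu (F i)).
  by apply: funext => n; rewrite big_split.
by apply: cvgD; [exact: muC|exact: nuC].
Qed.

Lemma countably_additiveZ (a : R) (mu : set X -> R) : countably_additive Sigma mu ->
  countably_additive Sigma (fun E => a * mu E).
Proof.
move=> muC F SF tF.
have -> : (fun n : nat => \sum_(0 <= i < n) (a * mu (F i))) =
    (fun n => a * \sum_(0 <= i < n) mu (F i)) by apply: funext => n; rewrite mulr_sumr.
by apply: cvgMl_tmp; exact: muC.
Qed.

Lemma sum_measure_closed (P : (set X -> R) -> Prop) (mu : nat -> set X -> R) n :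
  P (fun _ => 0) -> (forall nu1 nu2, P nu1 -> P nu2 -> P (fun E => nu1 E + nu2 E)) ->
  (forall k, (k < n)%N -> P (mu k)) -> P (fun E => \sum_(k < n) mu k E).
Proof.
move=> P0 PD; elim: n => [|n IH] Pmu.
  by under eq_fun do rewrite big_ord0.
under eq_fun do rewrite big_ord_recr /=.
by apply: PD; [apply: IH => k /ltnW; exact: Pmu|exact: Pmu].
Qed.

End MeasureAlgebra.

Section IntegralLinear.
Variables (R : realType) (X : Type) (Sigma : set (set X)).
Hypothesis sigmaS : is_sigma_algebra Sigma.

Lemma fa_integral_meq (mu nu : set X -> R) f : meq Sigma mu nu ->
  fa_integral Sigma mu f = fa_integral Sigma nu f.
Proof.
move=> munu; rewrite /fa_integral; congr sup; apply/seteqP.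
by split => s [n [F [PF ->]]]; exists n, F; split => //; apply: eq_bigr => i _;
  rewrite munu //; exact: partition_sigma PF (ltn_ord i).
Qed.

Lemma lower_sumDmeasure (mu nu : set X -> R) f n F :
  lower_sum (fun E => mu E + nu E) f n F = lower_sum mu f n F + lower_sum nu f n F.
Proof. by rewrite /lower_sum -big_split; apply: eq_bigr => i _; rewrite mulrDr. Qed.

Lemma fa_integralDmeasure (mu nu : set X -> R) f :
  ba_measure Sigma mu -> nonneg_measure Sigma mu ->
  ba_measure Sigma nu -> nonneg_measure Sigma nu ->
  Sigma_measurable_fun Sigma f -> (forall x, 0 <= f x <= 1) ->
  fa_integral Sigma (fun E => mu E + nu E) f =
  fa_integral Sigma mu f + fa_integral Sigma nu f.
Proof.
move=> muB mu0 nuB nu0 fS f01.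
have munuB := ba_measureD muB nuB; have munu0 := nonneg_measureD mu0 nu0.
have f0 x : 0 <= f x by case/andP: (f01 x).
have mass0 : 0 <= mu setT + nu setT by apply: munu0; exact: sigmaT.
have PF N := level_set_partition sigmaS N fS f01.
apply/eqP; rewrite eq_le; apply/andP; split; apply: (le_of_le_add_invS mass0) => N.
  apply: le_trans (integral_le_lower_sum sigmaS munuB munu0 f0 (PF N) (@level_set_osc _ _ f N)) _.
  rewrite /= lower_sumDmeasure lerD2r.
  by apply: lerD; [exact: (lower_sum_le_integral sigmaS muB mu0 f01 (PF N))|
                   exact: (lower_sum_le_integral sigmaS nuB nu0 f01 (PF N))].
have := lerD (integral_le_lower_sum sigmaS muB mu0 f0 (PF N) (@level_set_osc _ _ f N))
              (integral_le_lower_sum sigmaS nuB nu0 f0 (PF N) (@level_set_osc _ _ f N)).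
move/le_trans; apply; rewrite addrACA -mulrDr -lower_sumDmeasure lerD2r.
exact: (lower_sum_le_integral sigmaS munuB munu0 f01 (PF N)).
Qed.

Variable mu : set X -> R.
Hypotheses (muB : ba_measure Sigma mu) (mu0 : nonneg_measure Sigma mu).

Lemma lower_sumDfun_le (f g : X -> R) d n F : (forall x, 0 <= f x) -> (forall x, 0 <= g x) ->
  finite_partition Sigma n F -> osc_le f d n F -> osc_le g d n F ->
  lower_sum mu (fun x => f x + g x) n F <=
  lower_sum mu f n F + lower_sum mu g n F + (d + d) * mu setT.
Proof.
move=> f0 g0 PF oscf oscg.
rewrite /lower_sum -(measure_partition sigmaS muB PF) mulr_sumr -!big_split /=.
apply: ler_sum => i _; rewrite -!mulrDl.
have [->|/set0P[x Fx]] := eqVneq (F i) set0; first by rewrite (measure0 muB) !mulr0.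
apply: ler_wpM2r; first by apply: mu0; exact: partition_sigma PF (ltn_ord i).
apply: le_trans (inf_image_le (fun x => addr_ge0 (f0 x) (g0 x)) Fx) _.
have := osc_le_inf oscf (ltn_ord i) Fx; have := osc_le_inf oscg (ltn_ord i) Fx; lra.
Qed.

Lemma lower_sumDfun_ge (f g : X -> R) n F : (forall x, 0 <= f x) -> (forall x, 0 <= g x) ->
  finite_partition Sigma n F ->
  lower_sum mu f n F + lower_sum mu g n F <= lower_sum mu (fun x => f x + g x) n F.
Proof.
move=> f0 g0 PF; rewrite /lower_sum -big_split /=; apply: ler_sum => i _; rewrite -mulrDl.
have [->|/set0P[x Fx]] := eqVneq (F i) set0; first by rewrite (measure0 muB) !mulr0.
apply: ler_wpM2r; first by apply: mu0; exact: partition_sigma PF (ltn_ord i).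
by apply: (le_inf_image Fx) => y Fy; apply: lerD; exact: inf_image_le.
Qed.

Lemma fa_integralDfun (f g : X -> R) :
  Sigma_measurable_fun Sigma f -> (forall x, 0 <= f x <= 1) ->
  Sigma_measurable_fun Sigma g -> (forall x, 0 <= g x <= 1) ->
  fa_integral Sigma mu (fun x => f x + g x) = fa_integral Sigma mu f + fa_integral Sigma mu g.
Proof.
move=> fS f01 gS g01.
have f0 x : 0 <= f x by case/andP: (f01 x).
have g0 x : 0 <= g x by case/andP: (g01 x).
have fg02 x : 0 <= f x + g x <= 2.
  by case/andP: (f01 x) => ? ?; case/andP: (g01 x) => ? ?; apply/andP; split; lra.
have mass0 : 0 <= mu setT by apply: mu0; exact: sigmaT.
have mass4 : 0 <= 4 * mu setT by apply: mulr_ge0.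
apply/eqP; rewrite eq_le; apply/andP; split; apply: (le_of_le_add_invS mass4) => N;
  have [n [F [PF oscf oscg]]] := common_osc_partition sigmaS N fS f01 gS g01.
  have oscfg := osc_le_add oscf oscg.
  have fg0 x : 0 <= f x + g x by apply: addr_ge0.
  have := integral_le_lower_sum sigmaS muB mu0 fg0 PF oscfg.
  have := lower_sumDfun_le f0 g0 PF oscf oscg.
  have := lower_sum_le_integral sigmaS muB mu0 f01 PF.
  have := lower_sum_le_integral sigmaS muB mu0 g01 PF.
  set t := N.+1%:R^-1; nra.
have := integral_le_lower_sum sigmaS muB mu0 f0 PF oscf.
have := integral_le_lower_sum sigmaS muB mu0 g0 PF oscg.
have := lower_sumDfun_ge f0 g0 PF.
have := lower_sum_le_integral sigmaS muB mu0 fg02 PF.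
set t := N.+1%:R^-1; have : 0 <= t by rewrite invr_ge0.
nra.
Qed.

End IntegralLinear.

Section IntegralBounds.
Variables (R : realType) (X : Type) (Sigma : set (set X)).
Hypothesis sigmaS : is_sigma_algebra Sigma.
Variable mu : set X -> R.
Hypotheses (muB : ba_measure Sigma mu) (mu0 : nonneg_measure Sigma mu).

Lemma fa_integral_cst1 (x0 : X) : fa_integral Sigma mu (fun _ => 1) = mu setT.
Proof.
have one01 (x : X) : 0 <= (1 : R) <= 1 by rewrite ler01 lexx.
have osc0 : osc_le (fun _ : X => 1 : R) 0 1 (fun _ => setT) by move=> *; rewrite addr0.
have PT := partition_setT sigmaS.
have lsum1 : lower_sum mu (fun _ => 1) 1 (fun _ => setT) = mu setT.
  rewrite /lower_sum big_ord1.
  have -> : [set (1 : R) | _ in [set: X]] = [set 1].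
    by apply/seteqP; split => [_ [x _ <-] //|_ ->]; exists x0.
  by rewrite inf1 mul1r.
apply/eqP; rewrite eq_le; apply/andP; split.
  have := integral_le_lower_sum sigmaS muB mu0 (fun _ => ler01) PT osc0.
  by rewrite lsum1 mul0r addr0.
by have := lower_sum_le_integral sigmaS muB mu0 one01 PT; rewrite lsum1.
Qed.

Lemma inf_mul_le_superlevel (h : X -> R) e A : Sigma_measurable_fun Sigma h ->
  (forall x, 0 <= h x <= 1) -> 0 <= e -> Sigma A ->
  inf (h @` A) * mu A <= e * mu A + mu ([set x | e < h x] `&` A).
Proof.
move=> hS h01 e0 SA; have h0 x : 0 <= h x by case/andP: (h01 x).
have muA0 : 0 <= mu A := mu0 SA.
have [[y Ay hye]|noy] := pselect (exists2 y, A y & h y <= e).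
  apply: le_trans (ler_wpM2r muA0 (le_trans (inf_image_le h0 Ay) hye)) _.
  by rewrite lerDl; apply/mu0/(sigmaI sigmaS) => //; exact: sigma_gt.
have [->|/set0P[x Ax]] := eqVneq A set0.
  by rewrite setI0 (measure0 muB) !mulr0 addr0.
have -> : [set x | e < h x] `&` A = A.
  apply/seteqP; split => [y []//|y Ay]; split => //=; rewrite ltNge; apply/negP => hye.
  by apply: noy; exists y.
have hx1 : h x <= 1 by case/andP: (h01 x).
apply: le_trans (ler_wpM2r muA0 (le_trans (inf_image_le h0 Ax) hx1)) _.
by rewrite mul1r lerDr; apply: mulr_ge0.
Qed.

Lemma fa_integral_le_superlevel (h : X -> R) e : Sigma_measurable_fun Sigma h ->
  (forall x, 0 <= h x <= 1) -> 0 <= e ->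
  fa_integral Sigma mu h <= e * mu setT + mu [set x | e < h x].
Proof.
move=> hS h01 e0; have h0 x : 0 <= h x by case/andP: (h01 x).
have mass0 : 0 <= mu setT := mu0 (sigmaT sigmaS).
apply: (le_of_le_add_invS mass0) => N; have PF := level_set_partition sigmaS N hS h01.
apply: le_trans (integral_le_lower_sum sigmaS muB mu0 h0 PF (@level_set_osc _ _ h N)) _.
rewrite lerD2r /lower_sum -(measure_partition sigmaS muB PF).
rewrite -(measure_partition_setI sigmaS muB PF (sigma_gt sigmaS e hS)) mulr_sumr -big_split /=.
apply: ler_sum => i _; apply: inf_mul_le_superlevel => //.
exact: partition_sigma PF (ltn_ord i).
Qed.

End IntegralBounds.

Lemma cvg_nat_dist_le (R : realType) (u : nat -> R) l : u @ \oo --> l ->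
  forall e, 0 < e -> exists N, forall n, (N <= n)%N -> `|l - u n| <= e.
Proof.
by move/cvgrPdist_le => ul e e0; have [N _ uN] := ul e e0; exists N => n; exact: uN.
Qed.

Definition bigcup_tail (X : Type) (E : nat -> set X) N :=
  \bigcup_n E n `\` \big[setU/set0]_(0 <= i < N) E i.

Lemma bigcup_tailS (X : Type) (E : nat -> set X) N : bigcup_tail E N.+1 `<=` bigcup_tail E N.
Proof. by move=> x [Ex nU]; split => // U; apply: nU; rewrite big_nat_recr //; left. Qed.

Section CountablyAdditive.
Variables (R : realType) (X : Type) (Sigma : set (set X)).
Hypothesis sigmaS : is_sigma_algebra Sigma.

Lemma sigma_bigcup_tail (E : nat -> set X) N : (forall n, Sigma (E n)) ->
  Sigma (bigcup_tail E N).
Proof.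
move=> SE; apply: (sigmaD sigmaS); first exact: sigma_bigcup.
exact: sigma_bigsetU.
Qed.

Lemma measure_bigcup_tail (lam : set X -> R) (E : nat -> set X) N :
  ba_measure Sigma lam -> (forall n, Sigma (E n)) -> trivIset setT E ->
  lam (\bigcup_n E n) = \sum_(0 <= i < N) lam (E i) + lam (bigcup_tail E N).
Proof.
move=> lamB SE tE; have SU : Sigma (\big[setU/set0]_(0 <= i < N) E i).
  exact: sigma_bigsetU.
rewrite /bigcup_tail (measureID sigmaS lamB (sigma_bigcup sigmaS SE) SU) setIidr; last first.
  by move=> x /in_bigsetU_nat[i _ Eix]; exists i.
by rewrite (measure_bigsetU sigmaS lamB) // => i j _ _; exact: trivIset_setI0 tE I I.
Qed.

Lemma countably_additive_tail (lam : set X -> R) :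
  ba_measure Sigma lam -> nonneg_measure Sigma lam ->
  (forall E : nat -> set X, (forall n, Sigma (E n)) -> trivIset setT E ->
     forall e, 0 < e -> exists N, lam (\bigcup_n E n) <= \sum_(0 <= i < N) lam (E i) + e) ->
  countably_additive Sigma lam.
Proof.
move=> lamB lam0 tail E SE tE; apply/cvgrPdist_le => e e0.
have [N lamN] := tail E SE tE e e0; exists N => // n /= Nn.
have tail0 := lam0 _ (sigma_bigcup_tail n SE).
have := measure_bigcup_tail n lamB SE tE.
have : \sum_(0 <= i < N) lam (E i) <= \sum_(0 <= i < n) lam (E i).
  rewrite (big_cat_nat (leq0n N) Nn) /= lerDl.
  by apply: sumr_ge0 => i _; exact: lam0.
move: lamN tail0; set sN := \sum_(0 <= i < N) _; set sn := \sum_(0 <= i < n) _.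
set t := lam (bigcup_tail _ _); set L := lam _ => lamN t0 sNn Lsn.
by rewrite Lsn addrC addKr ger0_norm //; lra.
Qed.

Lemma countably_additive_decreasing (mu : set X -> R) (S : nat -> set X) :
  ba_measure Sigma mu -> nonneg_measure Sigma mu -> countably_additive Sigma mu ->
  (forall n, Sigma (S n)) -> (forall n, S n.+1 `<=` S n) -> (forall x, exists N, ~ S N x) ->
  forall e, 0 < e -> exists N, mu (S N) <= e.
Proof.
move=> muB mu0 muC SS Sdec Sempty e e0.
have Sle i j : (i <= j)%N -> S j `<=` S i.
  move=> /subnK <-; elim: (j - i)%N => [|k IH] //=.
  by rewrite addSn => x /Sdec /IH.
pose D k := S k `\` S k.+1.
have SD k : Sigma (D k) by apply: (sigmaD sigmaS).
have tD : trivIset setT D.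
  move=> i j _ _ [x [[Six nSi] [Sjx nSj]]]; case: (ltngtP i j) => // ij.
    by exfalso; apply: nSi; exact: (Sle i.+1 j).
  by exfalso; apply: nSj; exact: (Sle j.+1 i).
have UD : \bigcup_n D n = S 0%N.
  apply/seteqP; split => [x [k _ [Skx _]]|x S0x]; first exact: (Sle 0%N k).
  have exN : exists N, `[< ~ S N x >] by have [N ?] := Sempty x; exists N; apply/asboolP.
  case: (ex_minnP exN) => -[/asboolP//|N] /asboolP nSN Nmin.
  exists N => //; split => //; apply: contrapT => SNx.
  by have := Nmin N (asboolT SNx); rewrite ltnn.
have sumD N : \sum_(0 <= k < N) mu (D k) = mu (S 0%N) - mu (S N).
  elim: N => [|N IH]; first by rewrite big_geq // subrr.
  by rewrite big_nat_recr //= IH /D (measureD sigmaS muB) //; ring.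
have [N muN] := cvg_nat_dist_le (muC D SD tD) e0.
exists N; have := muN N (leqnn N); rewrite sumD UD opprB addrC subrK.
by rewrite ger0_norm //; exact: mu0.
Qed.

Lemma countably_additive_le (lam nu : set X -> R) :
  ba_measure Sigma lam -> nonneg_measure Sigma lam ->
  ba_measure Sigma nu -> countably_additive Sigma nu ->
  (forall E, Sigma E -> lam E <= nu E) -> countably_additive Sigma lam.
Proof.
move=> lamB lam0 nuB nuC lamnu; apply: countably_additive_tail => // E SE tE e e0.
have [N nuN] := cvg_nat_dist_le (nuC E SE tE) e0; exists N.
rewrite (measure_bigcup_tail N lamB SE tE) lerD2l.
apply: le_trans (lamnu _ (sigma_bigcup_tail N SE)) _.
have := nuN N (leqnn N); rewrite (measure_bigcup_tail N nuB SE tE) addrC addKr.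
exact: le_trans (ler_norm _).
Qed.

End CountablyAdditive.

Definition pos_variation (R : realType) (X : Type) (Sigma : set (set X)) (d : set X -> R)
    (E : set X) : R :=
  sup [set d C | C in [set C | Sigma C /\ C `<=` E]].

Section PositiveVariation.
Variables (R : realType) (X : Type) (Sigma : set (set X)).
Hypothesis sigmaS : is_sigma_algebra Sigma.
Variable d : set X -> R.
Hypothesis dB : ba_measure Sigma d.

Let dsub E := [set d C | C in [set C | Sigma C /\ C `<=` E]].

Let dsub_neq0 E : dsub E !=set0.
Proof. by exists (d set0), set0 => //; split; [exact: sigma0|exact: sub0set]. Qed.

Let dsub_sup E : has_sup (dsub E).
Proof.
split; first exact: dsub_neq0.
have [M dM] := measure_bounded dB.
by exists M => _ [C [SC _] <-]; exact: le_trans (ler_norm _) (dM _ SC).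
Qed.

Lemma le_pos_variation E C : Sigma C -> C `<=` E -> d C <= pos_variation Sigma d E.
Proof. by move=> SC CE; apply: (ub_le_sup (dsub_sup E).2); exists C. Qed.

Lemma pos_variation_le E b : (forall C, Sigma C -> C `<=` E -> d C <= b) ->
  pos_variation Sigma d E <= b.
Proof. by move=> db; apply: ge_sup (dsub_neq0 E) _ => _ [C [SC CE] <-]; exact: db. Qed.

Lemma pos_variation_ge0 E : 0 <= pos_variation Sigma d E.
Proof. by rewrite -(measure0 dB); apply: le_pos_variation; [exact: sigma0|exact: sub0set]. Qed.

Lemma pos_variationU E F : Sigma E -> Sigma F -> E `&` F = set0 ->
  pos_variation Sigma d (E `|` F) = pos_variation Sigma d E + pos_variation Sigma d F.
Proof.
move=> SE SF EF0; apply/eqP; rewrite eq_le; apply/andP; split.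
  apply: pos_variation_le => C SC CEF; rewrite (measureID sigmaS dB SC SE).
  apply: lerD; apply: le_pos_variation.
  - exact: sigmaI.
  - exact: subIsetr.
  - exact: sigmaD.
  - by move=> x [/CEF[]].
rewrite /pos_variation -(sup_sumE (dsub_sup E) (dsub_sup F)); apply: ge_sup.
  by have [a ?] := dsub_neq0 E; have [b ?] := dsub_neq0 F; exists (a + b), a => //; exists b.
move=> _ [_ [C1 [SC1 C1E] <-]] [_ [C2 [SC2 C2F] <-] <-].
rewrite -(measureU dB SC1 SC2); last exact: subsetI_eq0 C1E C2F EF0.
by apply: le_pos_variation; [exact: sigmaU|exact: setUSS].
Qed.

Lemma ba_pos_variation : ba_measure Sigma (pos_variation Sigma d).
Proof.
split.
- apply/eqP; rewrite eq_le pos_variation_ge0 andbT.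
  by apply: pos_variation_le => C SC; rewrite subset0 => ->; rewrite (measure0 dB).
- exact: pos_variationU.
have [M dM] := measure_bounded dB.
exists M => E SE; rewrite ger0_norm ?pos_variation_ge0 //.
by apply: pos_variation_le => C SC _; exact: le_trans (ler_norm _) (dM _ SC).
Qed.

Lemma countably_additive_pos_variation : countably_additive Sigma d ->
  countably_additive Sigma (pos_variation Sigma d).
Proof.
move=> dC; apply: countably_additive_tail ba_pos_variation _ _ => //.
  by move=> E _; exact: pos_variation_ge0.
move=> E SE tE e e0; have e20 : 0 < e / 2 by apply: divr_gt0.
have [_ [C [SC CU] <-] Cnear] := sup_adherent e20 (dsub_sup (\bigcup_n E n)).
have SCE n : Sigma (C `&` E n) by apply: sigmaI.
have tCE : trivIset setT (fun n => C `&` E n).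
  by move=> i j _ _ [x [[_ Eix] [_ Ejx]]]; apply: tE => //; exists x.
have [N dN] := cvg_nat_dist_le (dC _ SCE tCE) e20; exists N.
have := dN N (leqnn N); rewrite -setI_bigcupr setIidl // => /(le_trans (ler_norm _)).
have : \sum_(0 <= i < N) d (C `&` E i) <= \sum_(0 <= i < N) pos_variation Sigma d (E i).
  by apply: ler_sum => i _; apply: le_pos_variation; [exact: SCE|exact: subIsetr].
move: Cnear; rewrite -/(pos_variation Sigma d _).
set s1 := \sum_(0 <= i < N) d _; set s2 := \sum_(0 <= i < N) pos_variation _ _ _; lra.
Qed.

End PositiveVariation.

Section PurelyFinitelyAdditive.
Variables (R : realType) (X : Type) (Sigma : set (set X)).
Hypothesis sigmaS : is_sigma_algebra Sigma.

Lemma ca_le_pfa_le0 (d q : set X -> R) :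
  ba_measure Sigma d -> countably_additive Sigma d -> purely_fa Sigma q ->
  (forall E, Sigma E -> d E <= q E) -> forall E, Sigma E -> d E <= 0.
Proof.
move=> dB dC [qB q0 qpfa] dq E SE.
have dpos0 : meq Sigma (pos_variation Sigma d) (fun _ => 0).
  apply: (qpfa (pos_variation Sigma d)).
  - exact: (ba_pos_variation sigmaS dB).
  - exact: (countably_additive_pos_variation sigmaS dB dC).
  move=> F SF; rewrite (pos_variation_ge0 sigmaS dB) /=.
  apply: (pos_variation_le sigmaS) => C SC CF.
  exact: le_trans (dq _ SC) (le_measure sigmaS qB q0 SF SC CF).
by have := le_pos_variation sigmaS dB SE (@subset_refl _ E); rewrite dpos0.
Qed.

Lemma ca_le_add_pfa (c1 c2 q : set X -> R) :
  ba_measure Sigma c1 -> countably_additive Sigma c1 ->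
  ba_measure Sigma c2 -> countably_additive Sigma c2 -> purely_fa Sigma q ->
  (forall E, Sigma E -> c1 E <= c2 E + q E) -> forall E, Sigma E -> c1 E <= c2 E.
Proof.
move=> c1B c1C c2B c2C qpfa c12q E SE; rewrite -subr_le0 -mulN1r.
apply: (ca_le_pfa_le0 _ _ qpfa (d := fun E => c1 E + - 1 * c2 E)) => //.
- exact/ba_measureD/ba_measureZ.
- exact/countably_additiveD/countably_additiveZ.
by move=> F SF; rewrite mulN1r lerBlDl; exact: c12q.
Qed.

End PurelyFinitelyAdditive.

Section Meet.
Variables (R : realType) (X : Type) (Sigma : set (set X)).
Hypothesis sigmaS : is_sigma_algebra Sigma.
Variables mu nu : set X -> R.
Hypotheses (mu0 : nonneg_measure Sigma mu) (nu0 : nonneg_measure Sigma nu).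

Let msub E := [set mu C + nu (E `\` C) | C in [set C | Sigma C /\ C `<=` E]].

Let msub_neq0 E : msub E !=set0.
Proof.
by exists (mu set0 + nu (E `\` set0)), set0 => //; split; [exact: sigma0|exact: sub0set].
Qed.

Let msub_inf E : Sigma E -> has_inf (msub E).
Proof.
split; first exact: msub_neq0.
exists 0 => _ [C [SC _] <-]; apply: addr_ge0; first exact: mu0.
by apply: nu0; exact: sigmaD.
Qed.

Lemma meas_meet_le E C : Sigma E -> Sigma C -> C `<=` E ->
  meas_meet Sigma mu nu E <= mu C + nu (E `\` C).
Proof. by move=> SE SC CE; apply: (ge_inf (msub_inf SE).2); exists C. Qed.

Lemma le_meas_meet E b : (forall C, Sigma C -> C `<=` E -> b <= mu C + nu (E `\` C)) ->
  b <= meas_meet Sigma mu nu E.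
Proof. by move=> bm; apply: lb_le_inf (msub_neq0 E) _ => _ [C [SC CE] <-]; exact: bm. Qed.

Lemma meas_meet_ge0 E : Sigma E -> 0 <= meas_meet Sigma mu nu E.
Proof.
move=> SE; apply: le_meas_meet => C SC CE; apply: addr_ge0; first exact: mu0.
by apply: nu0; exact: sigmaD.
Qed.

Hypotheses (muB : ba_measure Sigma mu) (nuB : ba_measure Sigma nu).

Lemma meas_meet_lel E : Sigma E -> meas_meet Sigma mu nu E <= mu E.
Proof.
move=> SE; apply: le_trans (meas_meet_le SE SE (@subset_refl _ E)) _.
by rewrite setDv (measure0 nuB) addr0.
Qed.

Lemma meas_meet_ler E : Sigma E -> meas_meet Sigma mu nu E <= nu E.
Proof.
move=> SE; apply: le_trans (meas_meet_le SE (sigma0 sigmaS) (@sub0set _ E)) _.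
by rewrite setD0 (measure0 muB) add0r.
Qed.

Lemma meas_meetU_le E F : Sigma E -> Sigma F -> E `&` F = set0 ->
  meas_meet Sigma mu nu (E `|` F) <= meas_meet Sigma mu nu E + meas_meet Sigma mu nu F.
Proof.
move=> SE SF EF0; have SEF := sigmaU sigmaS SE SF.
rewrite -inf_sumE; [|exact: msub_inf|exact: msub_inf].
apply: lb_le_inf.
  by have [a ?] := msub_neq0 E; have [b ?] := msub_neq0 F; exists (a + b), a => //; exists b.
move=> _ [_ [C1 [SC1 C1E] <-]] [_ [C2 [SC2 C2F] <-] <-].
apply: le_trans (meas_meet_le SEF (sigmaU sigmaS SC1 SC2) (setUSS C1E C2F)) _.
rewrite (measureU muB SC1 SC2); last exact: subsetI_eq0 C1E C2F EF0.
have -> : (E `|` F) `\` (C1 `|` C2) = (E `\` C1) `|` (F `\` C2).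
  apply/seteqP; split => x /=.
    by move=> [[Ex|Fx] nC]; [left|right]; split => // Cx; apply: nC; [left|right].
  have EnF := (disjoints_subset E F).1 EF0.
  move=> [[Ex nC1]|[Fx nC2]]; split; [by left| |by right|].
    by case=> // /C2F; exact: EnF.
  by case=> // /C1E /EnF; apply.
rewrite (measureU nuB); [by rewrite addrACA|exact: sigmaD|exact: sigmaD|].
exact: subsetI_eq0 (@subDsetl _ E C1) (@subDsetl _ F C2) EF0.
Qed.

Lemma meas_meetU_ge E F : Sigma E -> Sigma F -> E `&` F = set0 ->
  meas_meet Sigma mu nu E + meas_meet Sigma mu nu F <= meas_meet Sigma mu nu (E `|` F).
Proof.
move=> SE SF EF0; apply: le_meas_meet => C SC CEF.
have EnF := (disjoints_subset E F).1 EF0.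
have SEF := sigmaU sigmaS SE SF.
have SEFC : Sigma ((E `|` F) `\` C) by exact: sigmaD.
rewrite (measureID sigmaS muB SC SE) (measureID sigmaS nuB SEFC SE).
have -> : C `\` E = C `&` F.
  apply/seteqP; split => x [Cx Hx]; split => //; first by case: (CEF x Cx).
  by move/EnF.
have -> : ((E `|` F) `\` C) `&` E = E `\` (C `&` E).
  apply/seteqP; split => x /=; first by move=> [[_ nC] Ex]; split => // -[].
  by move=> [Ex nCE]; split => //; split; [left|move=> Cx; apply: nCE].
have -> : ((E `|` F) `\` C) `\` E = F `\` (C `&` F).
  apply/seteqP; split => x /=; first by move=> [[[Ex|Fx] nC] nE] //; split => // -[].
  move=> [Fx nCF]; split; first by split; [right|move=> Cx; apply: nCF].
  by move/EnF.
rewrite addrACA; apply: lerD; apply: meas_meet_le => //; try exact: sigmaI.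
all: exact: subIsetr.
Qed.

Lemma ba_meas_meet : ba_measure Sigma (meas_meet Sigma mu nu).
Proof.
split.
- apply/eqP; rewrite eq_le meas_meet_ge0 ?andbT; last exact: sigma0.
  by have := meas_meet_lel (sigma0 sigmaS); rewrite (measure0 muB).
- move=> E F SE SF EF0; apply/eqP; rewrite eq_le.
  by rewrite meas_meetU_le // meas_meetU_ge.
exists (mu setT) => E SE; rewrite ger0_norm ?meas_meet_ge0 //.
exact: le_trans (meas_meet_lel SE) (le_measure sigmaS muB mu0 (sigmaT sigmaS) SE (@subsetT _ E)).
Qed.

End Meet.


Lemma meas_meet_le_meet (R : realType) (X : Type) (Sigma : set (set X))
    (mu nu mu' nu' : set X -> R) E :
  is_sigma_algebra Sigma -> nonneg_measure Sigma mu -> nonneg_measure Sigma nu ->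
  (forall E, Sigma E -> mu E <= mu' E) -> (forall E, Sigma E -> nu E <= nu' E) -> Sigma E ->
  meas_meet Sigma mu nu E <= meas_meet Sigma mu' nu' E.
Proof.
move=> sigmaS mu0 nu0 mumu' nunu' SE; apply: (le_meas_meet sigmaS) => C SC CE.
apply: le_trans (meas_meet_le sigmaS mu0 nu0 SE SC CE) _.
by apply: lerD; [exact: mumu'|apply: nunu'; exact: (sigmaD sigmaS)].
Qed.

Section Disjointness.
Variables (R : realType) (X : Type) (Sigma : set (set X)).
Hypothesis sigmaS : is_sigma_algebra Sigma.

Lemma meas_disjoint_le (mu nu mu' nu' : set X -> R) :
  nonneg_measure Sigma mu' -> nonneg_measure Sigma nu' ->
  (forall E, Sigma E -> mu' E <= mu E) -> (forall E, Sigma E -> nu' E <= nu E) ->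
  meas_disjoint Sigma mu nu -> meas_disjoint Sigma mu' nu'.
Proof.
move=> mu'0 nu'0 mu'mu nu'nu munu E SE; apply/eqP; rewrite eq_le.
rewrite (meas_meet_ge0 sigmaS mu'0 nu'0 SE) andbT -(munu E SE).
exact: meas_meet_le_meet.
Qed.

Lemma meas_disjoint_split (mu nu a b a' b' : set X -> R) :
  nonneg_measure Sigma a -> nonneg_measure Sigma b ->
  nonneg_measure Sigma a' -> nonneg_measure Sigma b' ->
  meq Sigma mu (fun E => a E + b E) -> meq Sigma nu (fun E => a' E + b' E) ->
  meas_disjoint Sigma mu nu -> meas_disjoint Sigma a a' /\ meas_disjoint Sigma b b'.
Proof.
move=> a0 b0 a'0 b'0 muab nua'b' munu.
split; apply: (meas_disjoint_le _ _ _ _ munu) => // E SE; rewrite ?muab ?nua'b' //.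
- by rewrite lerDl; exact: b0.
- by rewrite lerDl; exact: b'0.
- by rewrite lerDr; exact: a0.
- by rewrite lerDr; exact: a'0.
Qed.

Lemma ca_pfa_disjoint (c q : set X -> R) : ba_measure Sigma c -> nonneg_measure Sigma c ->
  countably_additive Sigma c -> purely_fa Sigma q -> meas_disjoint Sigma c q.
Proof.
move=> cB c0 cC [qB q0 qpfa]; have cqB := ba_meas_meet sigmaS c0 q0 cB qB.
apply: (qpfa (meas_meet Sigma c q)) => //.
  apply: (countably_additive_le sigmaS cqB _ cB cC).
    by move=> E SE; exact: meas_meet_ge0.
  by move=> E SE; exact: (meas_meet_lel sigmaS c0 q0 qB SE).
move=> E SE; rewrite (meas_meet_ge0 sigmaS c0 q0 SE).
exact: (meas_meet_ler sigmaS c0 q0 cB SE).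
Qed.

Lemma purely_fa0 : purely_fa Sigma (fun _ : set X => (0 : R)).
Proof.
split => //; first exact: ba_measure0.
by move=> lam _ _ lam0 E SE; apply/eqP; rewrite eq_le; case/andP: (lam0 E SE) => -> ->.
Qed.

Lemma purely_faD (q1 q2 : set X -> R) : purely_fa Sigma q1 -> purely_fa Sigma q2 ->
  purely_fa Sigma (fun E => q1 E + q2 E).
Proof.
move=> q1pfa [q2B q20 q2pfa]; have [q1B q10 _] := q1pfa.
split; [exact: ba_measureD|exact: nonneg_measureD|].
move=> lam lamB lamC lamq; have lam0 : nonneg_measure Sigma lam.
  by move=> E SE; case/andP: (lamq E SE).
have lamq1 := ca_pfa_disjoint lamB lam0 lamC q1pfa.
apply: q2pfa => // E SE; rewrite (lam0 E SE) /= -subr_le0 -(lamq1 E SE).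
apply: (le_meas_meet sigmaS) => C SC CE; have SEC := sigmaD sigmaS SE SC.
have := measureD sigmaS lamB SE SC CE; have /andP[_ lamEC] := lamq _ SEC.
have := le_measure sigmaS q2B q20 SE SEC (@subDsetl _ E C); lra.
Qed.

Lemma purely_faZ (a : R) (q : set X -> R) : 0 < a -> purely_fa Sigma q ->
  purely_fa Sigma (fun E => a * q E).
Proof.
move=> a0 [qB q0 qpfa]; split; [exact: ba_measureZ|exact: nonneg_measureZ (ltW a0) q0|].
move=> lam lamB lamC lamq E SE.
have lama0 : a^-1 * lam E = 0.
  apply: (qpfa (fun E => a^-1 * lam E)) => //; first exact: ba_measureZ.
    exact: countably_additiveZ.
  move=> F SF; have /andP[lamF0 lamFq] := lamq F SF.
  apply/andP; split; first by rewrite mulr_ge0 // invr_ge0 ltW.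
  by rewrite ler_pdivrMl.
by move/eqP: lama0; rewrite mulf_eq0 invr_eq0 gt_eqF //= => /eqP.
Qed.

End Disjointness.

Section MarkovOperator.
Variables (R : realType) (X : Type) (Sigma : set (set X)).
Hypothesis sigmaS : is_sigma_algebra Sigma.
Variable p : X -> set X -> R.
Hypothesis pT : transition_function Sigma p.
Variable x0 : X.

Let p_measurable E : Sigma E -> Sigma_measurable_fun Sigma (fun x => p x E).
Proof. by case: pT => _ _ + _; apply. Qed.

Let p01 E : Sigma E -> forall x, 0 <= p x E <= 1.
Proof. by case: pT => + _ _ _ SE x; apply. Qed.

Let pB x : ba_measure Sigma (p x).
Proof. by case: pT => _ _ _ /(_ x)[]. Qed.

Let pC x : countably_additive Sigma (p x).
Proof. by case: pT => _ _ _ /(_ x)[]. Qed.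

Let p0 x : nonneg_measure Sigma (p x).
Proof. by move=> E SE; case/andP: (p01 SE x). Qed.

Lemma markov_op_meq (mu nu : set X -> R) E : meq Sigma mu nu ->
  markov_op Sigma p mu E = markov_op Sigma p nu E.
Proof. exact: fa_integral_meq. Qed.

Variable mu : set X -> R.
Hypotheses (muB : ba_measure Sigma mu) (mu0 : nonneg_measure Sigma mu).

Lemma markov_opD (nu : set X -> R) E :
  ba_measure Sigma nu -> nonneg_measure Sigma nu -> Sigma E ->
  markov_op Sigma p (fun F => mu F + nu F) E = markov_op Sigma p mu E + markov_op Sigma p nu E.
Proof.
by move=> nuB nu0 SE; apply: fa_integralDmeasure => //; [exact: p_measurable|exact: p01].
Qed.

Lemma markov_opU E F : Sigma E -> Sigma F -> E `&` F = set0 ->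
  markov_op Sigma p mu (E `|` F) = markov_op Sigma p mu E + markov_op Sigma p mu F.
Proof.
move=> SE SF EF0; rewrite /markov_op.
under eq_fun do rewrite (measureU (pB _) SE SF EF0).
by apply: (fa_integralDfun sigmaS muB mu0); [exact: p_measurable|exact: p01|
  exact: p_measurable|exact: p01].
Qed.

Lemma markov_op_ge0 : nonneg_measure Sigma (markov_op Sigma p mu).
Proof.
move=> E SE.
apply: le_trans (lower_sum_le_integral sigmaS muB mu0 (p01 SE) (partition_setT sigmaS)).
rewrite /lower_sum big_ord1; apply: mulr_ge0; last exact: mu0 (sigmaT sigmaS).
by apply: (le_inf_image (x := x0)) => // y _; case/andP: (p01 SE y).
Qed.

Lemma markov_op_setT : markov_op Sigma p mu setT = mu setT.
Proof.
have p1 x : p x setT = 1 by case: pT => _ + _ _; apply.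
rewrite /markov_op (_ : (fun x => p x setT) = fun _ => 1); last exact: funext.
exact: (fa_integral_cst1 sigmaS muB mu0 x0).
Qed.
Lemma ba_markov_op : ba_measure Sigma (markov_op Sigma p mu).
Proof.
have S0 := sigma0 sigmaS; split.
- by have := markov_opU S0 S0 (setI0 set0); rewrite setU0; lra.
- exact: markov_opU.
exists (mu setT) => E SE; rewrite ger0_norm; last exact: markov_op_ge0.
rewrite -markov_op_setT -(setUCr E) markov_opU ?setICr //; last exact: (sigmaC sigmaS).
by rewrite lerDl; apply: markov_op_ge0; exact: (sigmaC sigmaS).
Qed.

Let p_bigcup_tail_le (E : nat -> set X) x e : (forall n, Sigma (E n)) -> trivIset setT E ->
  0 < e -> exists N, p x (bigcup_tail E N) <= e.
Proof.
move=> SE tE e0; have [N pN] := cvg_nat_dist_le (pC (x := x) SE tE) e0; exists N.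
move: (pN N (leqnn N)); rewrite (measure_bigcup_tail sigmaS N (pB x) SE tE) addrC addKr.
by rewrite ger0_norm //; apply: p0; exact: (sigma_bigcup_tail sigmaS).
Qed.

Lemma countably_additive_markov_op : countably_additive Sigma mu ->
  countably_additive Sigma (markov_op Sigma p mu).
Proof.
move=> muC; apply: (countably_additive_tail sigmaS ba_markov_op markov_op_ge0) => E SE tE e e0.
have mass0 : 0 <= mu setT by apply: mu0; exact: sigmaT.
pose e' := e / 2 / (mu setT + 1).
have e'0 : 0 < e' by apply: divr_gt0; [exact: divr_gt0|lra].
have e'mass : e' * mu setT <= e / 2.
  rewrite -[leRHS](@divfK _ (mu setT + 1)) ?gt_eqF ?ler_wpM2l ?ltW //; lra.
pose S N := [set x | e' < p x (bigcup_tail E N)].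
have SS N : Sigma (S N) by apply/(sigma_gt sigmaS)/p_measurable/(sigma_bigcup_tail sigmaS).
have Sdec N : S N.+1 `<=` S N.
  move=> x /= /lt_le_trans; apply; apply: (le_measure sigmaS (pB x) (p0 x)).
  - exact: (sigma_bigcup_tail sigmaS).
  - exact: (sigma_bigcup_tail sigmaS).
  - exact: bigcup_tailS.
have Sempty x : exists N, ~ S N x.
  by have [N pN] := p_bigcup_tail_le x SE tE e'0; exists N; rewrite /S /= ltNge pN.
have e20 : 0 < e / 2 by apply: divr_gt0.
have [N muSN] := countably_additive_decreasing sigmaS muB mu0 muC SS Sdec Sempty e20.
exists N; rewrite (measure_bigcup_tail sigmaS N ba_markov_op SE tE) lerD2l.
have := fa_integral_le_superlevel sigmaS muB mu0 (p_measurable (sigma_bigcup_tail sigmaS N SE))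
  (p01 (sigma_bigcup_tail sigmaS N SE)) (ltW e'0).
rewrite -/(markov_op Sigma p mu _) -/(S N); lra.
Qed.

End MarkovOperator.

Section MeanMeasure.
Variables (R : realType) (X : Type) (Sigma : set (set X)).
Hypothesis sigmaS : is_sigma_algebra Sigma.
Variables (m : nat) (mu : nat -> set X -> R).

Lemma ba_mean_measure : (forall k, (k < m)%N -> ba_measure Sigma (mu k)) ->
  ba_measure Sigma (mean_measure m mu).
Proof.
move=> muB; apply: ba_measureZ; apply: sum_measure_closed muB.
  exact: ba_measure0.
exact: ba_measureD.
Qed.

Lemma countably_additive_mean_measure :
  (forall k, (k < m)%N -> countably_additive Sigma (mu k)) ->
  countably_additive Sigma (mean_measure m mu).
Proof.
move=> muC; apply: countably_additiveZ; apply: sum_measure_closed muC.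
  exact: countably_additive0.
exact: countably_additiveD.
Qed.

Lemma purely_fa_mean_measure : (0 < m)%N ->
  (forall k, (k < m)%N -> purely_fa Sigma (mu k)) -> purely_fa Sigma (mean_measure m mu).
Proof.
move=> m0 mupfa; apply: purely_faZ; first by rewrite invr_gt0 ltr0n.
apply: sum_measure_closed mupfa; first exact: purely_fa0.
exact: purely_faD.
Qed.

Lemma mean_measureD (nu1 nu2 : nat -> set X -> R) :
  (forall k, (k < m)%N -> meq Sigma (mu k) (fun E => nu1 k E + nu2 k E)) ->
  meq Sigma (mean_measure m mu) (fun E => mean_measure m nu1 E + mean_measure m nu2 E).
Proof.
move=> munu E SE; rewrite /mean_measure -mulrDr -big_split; congr (_ * _).
by apply: eq_bigr => k _; exact: munu.
Qed.

End MeanMeasure.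

Lemma ca_pfa_decomposition_unique (R : realType) (X : Type) (Sigma : set (set X))
    (c q c' q' : set X -> R) :
  is_sigma_algebra Sigma ->
  ba_measure Sigma c -> countably_additive Sigma c -> purely_fa Sigma q ->
  ba_measure Sigma c' -> countably_additive Sigma c' -> purely_fa Sigma q' ->
  meq Sigma (fun E => c E + q E) (fun E => c' E + q' E) ->
  meq Sigma c c' /\ meq Sigma q q'.
Proof.
move=> sigmaS cB cC qpfa c'B c'C q'pfa cqc'q'.
have [_ q0 _] := qpfa; have [_ q'0 _] := q'pfa.
have cc' : meq Sigma c c'.
  move=> E SE; apply/eqP; rewrite eq_le; apply/andP; split.
    apply: (ca_le_add_pfa sigmaS cB cC c'B c'C q'pfa) SE => F SF.
    by have := cqc'q' F SF; have := q0 F SF; lra.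
  apply: (ca_le_add_pfa sigmaS c'B c'C cB cC qpfa) SE => F SF.
  by have := cqc'q' F SF; have := q'0 F SF; lra.
by split => // E SE; have := cqc'q' E SE; rewrite cc' //; lra.
Qed.

Lemma sum_ord_modS (V : nmodType) (g : nat -> V) m : (0 < m)%N ->
  \sum_(i < m) g (i.+1 %% m)%N = \sum_(i < m) g i.
Proof.
case: m => // m _; rewrite big_ord_recr big_ord_recl /= modnn addrC; congr (_ + _).
by apply: eq_bigr => i _; rewrite modn_small //= ltnS.
Qed.

Lemma meq_of_le_setT (R : realType) (X : Type) (Sigma : set (set X)) (l1 l2 : set X -> R) :
  is_sigma_algebra Sigma -> ba_measure Sigma l1 -> ba_measure Sigma l2 ->
  (forall E, Sigma E -> l1 E <= l2 E) -> l1 setT = l2 setT -> meq Sigma l1 l2.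
Proof.
move=> sigmaS l1B l2B l12 l12T E SE; have SCE := sigmaC sigmaS SE.
have := l12 _ SE; have := l12 _ SCE; move: l12T.
by rewrite -(setUCr E) (measureU l1B) ?(measureU l2B) ?setICr //; lra.
Qed.

Section CycleDecomposition.
Variables (R : realType) (X : Type) (Sigma : set (set X)).
Hypothesis sigmaS : is_sigma_algebra Sigma.
Variables (p : X -> set X -> R) (x0 : X).
Hypothesis pT : transition_function Sigma p.
Variables (m : nat) (mu muca mupfa : nat -> set X -> R).
Hypothesis m0 : (0 < m)%N.
Hypothesis mu_cycle :
  forall i, (i < m)%N -> meq Sigma (markov_op Sigma p (mu i)) (mu (i.+1 %% m)%N).
Hypothesis mu_decomp : forall i, (i < m)%N ->
  [/\ ba_measure Sigma (muca i), nonneg_measure Sigma (muca i),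
      countably_additive Sigma (muca i), purely_fa Sigma (mupfa i) &
      meq Sigma (mu i) (fun E => muca i E + mupfa i E)].

Let mucaB i : (i < m)%N -> ba_measure Sigma (muca i). Proof. by case/mu_decomp. Qed.
Let muca0 i : (i < m)%N -> nonneg_measure Sigma (muca i). Proof. by case/mu_decomp. Qed.
Let mucaC i : (i < m)%N -> countably_additive Sigma (muca i). Proof. by case/mu_decomp. Qed.
Let mupfa_pfa i : (i < m)%N -> purely_fa Sigma (mupfa i). Proof. by case/mu_decomp. Qed.
Let mu_split i : (i < m)%N -> meq Sigma (mu i) (fun E => muca i E + mupfa i E).
Proof. by case/mu_decomp. Qed.
Let ltn_modS i : (i.+1 %% m < m)%N. Proof. by rewrite ltn_pmod. Qed.

Let markov_op_split i E : (i < m)%N -> Sigma E ->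
  mu (i.+1 %% m)%N E = markov_op Sigma p (muca i) E + markov_op Sigma p (mupfa i) E.
Proof.
move=> ilt SE; have [pfaB pfa0 _] := mupfa_pfa ilt.
rewrite -mu_cycle // (markov_op_meq p _ (mu_split ilt)).
exact: (markov_opD sigmaS pT (mucaB ilt) (muca0 ilt) pfaB pfa0 SE).
Qed.

Lemma markov_op_ca_le i E : (i < m)%N -> Sigma E ->
  markov_op Sigma p (muca i) E <= muca (i.+1 %% m)%N E.
Proof.
move=> ilt SE; have [pfaB pfa0 _] := mupfa_pfa ilt.
apply: (ca_le_add_pfa sigmaS (ba_markov_op sigmaS pT x0 (mucaB ilt) (muca0 ilt))
  (countably_additive_markov_op sigmaS pT x0 (mucaB ilt) (muca0 ilt) (mucaC ilt))
  (mucaB (ltn_modS i)) (mucaC (ltn_modS i)) (mupfa_pfa (ltn_modS i)) _ SE) => F SF.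
rewrite -mu_split // markov_op_split // lerDl.
exact: (markov_op_ge0 sigmaS pT x0 pfaB pfa0).
Qed.

Lemma markov_op_ca_cycle i : (i < m)%N ->
  meq Sigma (markov_op Sigma p (muca i)) (muca (i.+1 %% m)%N).
Proof.
(* The gaps in the total masses are nonnegative and sum to zero around the cycle. *)
have ST := sigmaT sigmaS.
pose gap (k : 'I_m) := muca (k.+1 %% m)%N setT - markov_op Sigma p (muca k) setT.
have gap0 (k : 'I_m) : true -> 0 <= gap k.
  by move=> _; rewrite subr_ge0; exact: (markov_op_ca_le (ltn_ord k) ST).
have sum_gap : \sum_(k < m) gap k = 0.
  rewrite sumrB (sum_ord_modS (fun k => muca k setT) m0).
  rewrite [X in _ - X](eq_bigr (fun k : 'I_m => muca k setT)) ?subrr // => k _.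
  exact: (markov_op_setT sigmaS pT x0 (mucaB (ltn_ord k)) (muca0 (ltn_ord k))).
move=> ilt; apply: (meq_of_le_setT sigmaS (ba_markov_op sigmaS pT x0 (mucaB ilt) (muca0 ilt))
  (mucaB (ltn_modS i))); first by move=> E SE; exact: markov_op_ca_le.
move/eqP: (psumr_eq0P gap0 sum_gap (i := Ordinal ilt) isT).
by rewrite /gap /= subr_eq0 => /eqP ->.
Qed.

Lemma markov_op_pfa_cycle i : (i < m)%N ->
  meq Sigma (markov_op Sigma p (mupfa i)) (mupfa (i.+1 %% m)%N).
Proof.
move=> ilt E SE; have := markov_op_split ilt SE.
by rewrite (mu_split (ltn_modS i) SE) (markov_op_ca_cycle ilt SE) => /addrI.
Qed.

End CycleDecomposition.

Theorem theorem4p4 (R : realType) (X : Type) (Sigma : set (set X))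
  (p : X -> set X -> R) (m : nat) (mu muca mupfa : nat -> set X -> R) :
  infinite_set [set: X] ->
  is_sigma_algebra Sigma ->
  (forall x : X, Sigma [set x]) ->
  transition_function Sigma p ->
  is_cycle Sigma p m mu ->
  (forall i j, (i < m)%N -> (j < m)%N -> i <> j ->
     meas_disjoint Sigma (mu i) (mu j)) ->
  (forall i, (i < m)%N ->
     [/\ ba_measure Sigma (muca i), nonneg_measure Sigma (muca i),
         countably_additive Sigma (muca i), purely_fa Sigma (mupfa i) &
         meq Sigma (mu i) (fun E => muca i E + mupfa i E)]) ->
  [/\ (forall i, (i < m)%N ->
         meq Sigma (markov_op Sigma p (muca i)) (muca (i.+1 %% m)%N)),
      (forall i, (i < m)%N ->
         meq Sigma (markov_op Sigma p (mupfa i)) (mupfa (i.+1 %% m)%N)),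
      (forall i, (i < m)%N -> meq Sigma (mu i) (fun E => muca i E + mupfa i E)),
      [/\ ba_measure Sigma (mean_measure m muca),
          countably_additive Sigma (mean_measure m muca),
          purely_fa Sigma (mean_measure m mupfa),
          meq Sigma (mean_measure m mu)
            (fun E => mean_measure m muca E + mean_measure m mupfa E) &
          (forall c q : set X -> R,
             ba_measure Sigma c -> countably_additive Sigma c ->
             purely_fa Sigma q ->
             meq Sigma (mean_measure m mu) (fun E => c E + q E) ->
             meq Sigma c (mean_measure m muca) /\
             meq Sigma q (mean_measure m mupfa))] &
      [/\ (forall i j, (i < m)%N -> (j < m)%N -> i <> j ->
             meas_disjoint Sigma (muca i) (muca j)),
          (forall i j, (i < m)%N -> (j < m)%N -> i <> j ->
             meas_disjoint Sigma (mupfa i) (mupfa j)) &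
          (forall i j, (i < m)%N -> (j < m)%N ->
             meas_disjoint Sigma (muca i) (mupfa j))]].
Proof.
(* Infiniteness of X is only used to pick a point. *)
move=> /infinite_setN0[x0 _] sigmaS _ pT [m0 _ _ mu_cycle] mu_disj mu_decomp.
have mucaB k : (k < m)%N -> ba_measure Sigma (muca k) by case/mu_decomp.
have muca0 k : (k < m)%N -> nonneg_measure Sigma (muca k) by case/mu_decomp.
have mucaC k : (k < m)%N -> countably_additive Sigma (muca k) by case/mu_decomp.
have mupfa_pfa k : (k < m)%N -> purely_fa Sigma (mupfa k) by case/mu_decomp.
have mupfa0 k : (k < m)%N -> nonneg_measure Sigma (mupfa k) by case/mupfa_pfa.
have mu_split k : (k < m)%N -> meq Sigma (mu k) (fun E => muca k E + mupfa k E).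
  by case/mu_decomp.
have meanB := ba_mean_measure mucaB; have meanC := countably_additive_mean_measure mucaC.
have meanP := purely_fa_mean_measure sigmaS m0 mupfa_pfa.
have mean_split := mean_measureD mu_split.
have split_disj i j ilt jlt ij := meas_disjoint_split sigmaS (muca0 i ilt) (mupfa0 i ilt)
  (muca0 j jlt) (mupfa0 j jlt) (mu_split i ilt) (mu_split j jlt) (mu_disj i j ilt jlt ij).
split => //.
- by move=> i; exact: (markov_op_ca_cycle sigmaS x0 pT m0 mu_cycle mu_decomp).
- by move=> i; exact: (markov_op_pfa_cycle sigmaS x0 pT m0 mu_cycle mu_decomp).
- split => // c q cB cC qpfa mean_cq.
  apply: (ca_pfa_decomposition_unique sigmaS cB cC qpfa meanB meanC meanP) => E SE.
  by rewrite -mean_cq // mean_split.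
split.
- by move=> i j ilt jlt ij; case: (split_disj i j ilt jlt ij).
- by move=> i j ilt jlt ij; case: (split_disj i j ilt jlt ij).
move=> i j ilt jlt.
exact: (ca_pfa_disjoint sigmaS (mucaB i ilt) (muca0 i ilt) (mucaC i ilt) (mupfa_pfa j jlt)).
Qed.
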